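(* Let $n,m\ge 3$ and let $G=P_n\square P_m$ be the grid graph. Let $(x_1,y_1),\dots,(x_k,y_k)$ be vertices and $(p,q)$ another vertex such that either $p<x_i$ for all $i\in\{1,\dots,k\}$ or $p>x_i$ for all $i\in\{1,\dots,k\}$, and either $q<y_i$ for all $i\in\{1,\dots,k\}$ or $q>y_i$ for all $i\in\{1,\dots,k\}$. Then there exist two neighbours of $(p,q)$, of the form $(p^*,q)$ and $(p,q^* )$, that are not resolved by any of the vertices $(p,q),(x_1,y_1),\dots,(x_k,y_k)$.
   Context: The grid graph $P_n\square P_m$ has vertex set $\{(i,j):0\le i\le n-1,\ 0\le j\le m-1\}$, with $(i,j)$ adjacent to $(k,l)$ iff $|i-k|+|j-l|=1$; distance $d((i,j),(k,l))=|i-k|+|j-l|$. A vertex $w$ resolves $x,y$ if $d(w,x)\ne d(w,y)$. *)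

From mathcomp Require Import all_boot.
Set Implicit Arguments. Unset Strict Implicit. Unset Printing Implicit Defensive.

Definition gvert (n m : nat) : Type := ('I_n * 'I_m)%type.

Definition absdiff (a b : nat) : nat := (a - b) + (b - a).

Definition gdist (n m : nat) (u v : gvert n m) : nat :=
  absdiff (val u.1) (val v.1) + absdiff (val u.2) (val v.2).

Definition gadj (n m : nat) (u v : gvert n m) : Prop := gdist u v = 1.

Definition resolves (n m : nat) (w x y : gvert n m) : Prop := gdist w x <> gdist w y.

From mathcomp Require Import all_boot.
From mathcomp Require Import zify.

(* Both coordinates are handled independently: on a path with at least two
   vertices, a vertex p lying strictly on one side of every target f i has a
   neighbour one step closer to all of them (towards the targets, or away from
   the boundary when there are none).  Moving v by such a step in either
   coordinate lowers every d((x_i, y_i), -) by exactly one, and both moved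
   vertices are at distance 1 from v, so no listed vertex resolves them. *)

Lemma absdiffnn (x : nat) : absdiff x x = 0.
Proof. by rewrite /absdiff subnn. Qed.

Lemma path_step_toward (n k : nat) (f : 'I_k -> nat) (p : 'I_n) :
  1 < n -> (forall i, f i < n) ->
  (forall i, p < f i) \/ (forall i, f i < p) ->
  exists a : 'I_n,
    absdiff p a = 1 /\ forall i, absdiff (f i) p = (absdiff (f i) a).+1.
Proof.
rewrite /absdiff => n_gt1 f_lt_n.
have p_lt_pred : p.-1 < n by have := ltn_ord p; lia.
case=> side.
- case: (ltnP p.+1 n) => [p_succ|p_max].
  + by exists (Ordinal p_succ); split=> [|i] /=; [lia | have := side i; lia].
  + exists (Ordinal p_lt_pred); split=> [|i] /=; first lia.
    (* p is the last vertex, so no target can lie above it. *)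
    by have := side i; have := f_lt_n i; lia.
- case: (posnP p) => [p0|p_pos].
  + have p_succ : p.+1 < n by lia.
    by exists (Ordinal p_succ); split=> [|i] /=; [lia | have := side i; lia].
  + by exists (Ordinal p_lt_pred); split=> [|i] /=; [lia | have := side i; lia].
Qed.

Theorem lemma2 (n m k : nat) (hn : 3 <= n) (hm : 3 <= m)
  (X : 'I_k -> gvert n m) (v : gvert n m)
  (hp : (forall i : 'I_k, val v.1 < val (X i).1) \/ (forall i : 'I_k, val (X i).1 < val v.1))
  (hq : (forall i : 'I_k, val v.2 < val (X i).2) \/ (forall i : 'I_k, val (X i).2 < val v.2)) :
  exists (ps : 'I_n) (qs : 'I_m),
    gadj v (ps, v.2) /\ gadj v (v.1, qs) /\
    ~ resolves v (ps, v.2) (v.1, qs) /\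
    (forall i : 'I_k, ~ resolves (X i) (ps, v.2) (v.1, qs)).
Proof.
have [ps [ps_adj ps_closer]] :=
  @path_step_toward n k _ v.1 (ltnW hn) (fun i => ltn_ord (X i).1) hp.
have [qs [qs_adj qs_closer]] :=
  @path_step_toward m k _ v.2 (ltnW hm) (fun i => ltn_ord (X i).2) hq.
exists ps, qs.
rewrite /gadj /resolves /gdist /= !absdiffnn.
split; [lia | split; [lia | split; [lia | move=> i]]].
by have := ps_closer i; have := qs_closer i; lia.
Qed.
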